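(* Let $G$ be a non-trivial abelian group (written additively) and $\varphi$ an automorphism of $G$. Let $G_\varphi$ be the set $G$ with the operation $g\rhd h=\varphi(g)+(\mathrm{id}-\varphi)(h)$. Then the following are equivalent: (i) $G_\varphi$ is finitely stable; (ii) $\varphi$ is a torsion element of the automorphism group $Aut(G)$.
   Context: For a rack $X$ and $u_1,\ldots,u_n\in X$, write $x\rhd(u_i)_{i=1}^n:=(\cdots((x\rhd u_1)\rhd u_2)\cdots)\rhd u_n$. A stabilizing family of order $n$ is a family $(u_1,\ldots,u_n)$ of elements of $X$ with $x\rhd(u_i)_{i=1}^n=x$ for all $x\in X$; $X$ is finitely stable if it has a stabilizing family of some order $n\ge 1$. *)

From mathcomp Require Import all_boot all_algebra.
Set Implicit Arguments. Unset Strict Implicit. Unset Printing Implicit Defensive.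
Import GRing.Theory.
Local Open Scope ring_scope.

Definition rack_iter (X : Type) (op : X -> X -> X) (x : X) (u : seq X) : X :=
  foldl op x u.

Definition stabilizing_family (X : Type) (op : X -> X -> X) (n : nat) (u : seq X) :=
  size u = n /\ forall x : X, rack_iter op x u = x.

Definition finitely_stable (X : Type) (op : X -> X -> X) :=
  exists n : nat, (1 <= n)%N /\ exists u : seq X, stabilizing_family op n u.

Definition Gphi_op (G : zmodType) (phi : G -> G) (g h : G) : G :=
  phi g + (h - phi h).

(* Right multiplication by a family u of length n in G_phi is the affine map
   x |-> phi^n(x) + c_u with c_u = 0 |> (u_i).  Hence u is stabilizing exactly
   when phi^n = id and c_u = 0, and the constant family 0 always has c_u = 0. *)
From HB Require Import structures.
From mathcomp Require Import all_boot all_algebra.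
Set Implicit Arguments. Unset Strict Implicit. Unset Printing Implicit Defensive.
Import GRing.Theory.
Local Open Scope ring_scope.

Section AffineRack.

Variables (G : zmodType) (phi : G -> G).
Hypothesis phi_add : {morph phi : x y / x + y}.

Lemma morph_add_sub : {morph phi : x y / x - y}.
Proof.
have phi0 : phi 0 = 0 by apply: (addrI (phi 0)); rewrite -phi_add !addr0.
have phiN z : phi (- z) = - phi z.
  by apply: (addrI (phi z)); rewrite -phi_add !subrr.
by move=> x y; rewrite phi_add phiN.
Qed.

#[local] HB.instance Definition _ := GRing.isZmodMorphism.Build G G phi morph_add_sub.

Lemma Gphi_opBl (x y h : G) : Gphi_op phi x h - Gphi_op phi y h = phi (x - y).
Proof. by rewrite /Gphi_op opprD addrACA subrr addr0 raddfB. Qed.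

Lemma rack_iterB (u : seq G) (x y : G) :
  rack_iter (Gphi_op phi) x u - rack_iter (Gphi_op phi) y u
  = iter (size u) phi (x - y).
Proof.
elim: u x y => [|h u IHu] x y //=.
by rewrite IHu Gphi_opBl -iterSr.
Qed.

Lemma rack_iterE (u : seq G) (x : G) :
  rack_iter (Gphi_op phi) x u
  = iter (size u) phi x + rack_iter (Gphi_op phi) 0 u.
Proof. by rewrite -[x in iter _ _ x]subr0 -rack_iterB subrK. Qed.

Lemma rack_iter_nseq0 (n : nat) : rack_iter (Gphi_op phi) 0 (nseq n 0) = 0.
Proof.
have op00 : Gphi_op phi 0 0 = 0 by rewrite /Gphi_op raddf0 subrr addr0.
by elim: n => //= n; rewrite op00.
Qed.

Lemma stabilizing_familyP (n : nat) (u : seq G) :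
  stabilizing_family (Gphi_op phi) n u <->
  [/\ size u = n, rack_iter (Gphi_op phi) 0 u = 0
    & forall x, iter n phi x = x].
Proof.
split=> [[size_u fix_u] | [size_u c_u0 phi_n]].
  have c_u0 := fix_u 0.
  split=> // x; rewrite -size_u -[RHS]fix_u.
  by rewrite rack_iterE c_u0 addr0.
by split=> // x; rewrite rack_iterE c_u0 addr0 size_u.
Qed.

End AffineRack.

Theorem mainTheorem6 (G : zmodType) (phi : G -> G)
    (G_nontrivial : exists g : G, g != 0)
    (phi_add : {morph phi : x y / x + y})
    (phi_bij : bijective phi) :
  finitely_stable (Gphi_op phi) <->
  exists k : nat, (1 <= k)%N /\ (forall x : G, iter k phi x = x).
Proof.
split=> [[n [n_gt0 [u /(stabilizing_familyP phi_add) [_ _ phi_n]]]]|].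
  by exists n.
move=> [k [k_gt0 phi_k]]; exists k; split=> //; exists (nseq k 0).
by apply/(stabilizing_familyP phi_add); rewrite size_nseq rack_iter_nseq0.
Qed.
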